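(* Let $\mathbb{H}$ denote the ring of real quaternions with its usual norm $|\cdot|$, and let $S$ be a dense subsemigroup of $(\mathbb{H},+)$ such that $S\cap\mathbb{H}$ is a subsemigroup of $(\mathbb{H}\setminus\{0\},\cdot)$. Let $B_d(1)=\{x\in\mathbb{H}:|x|<1\}$. (1) If $A\subseteq S$ is an IP set near $0$, then $sA=\{sa:a\in A\}$ is an IP set near $0$ for every $s\in S\cap B_d(1)\setminus\{0\}$. (2) If $A\subseteq S$ is an IP$^*$ set near $0$ in $(S,+)$, then both $s^{-1}A=\{t\in S: st\in A\}$ and $As^{-1}=\{t\in S: ts\in A\}$ are IP$^*$ sets near $0$ for every $s\in S\cap B_d(1)\setminus\{0\}$.
   Context: For a sequence $\langle x_n\rangle_{n=1}^\infty$, $FS(\langle x_n\rangle_{n=1}^\infty)=\{\sum_{n\in F}x_n: F \text{ a finite nonempty subset of }\mathbb{N}\}$. A subset $A$ of $S$ is an IP set near $0$ if there exists a sequence $\langle x_n\rangle_{n=1}^\infty$ in $S$ such that $\sum_{n=1}^\infty x_n$ converges and $FS(\langle x_n\rangle_{n=1}^\infty)\subseteq A$. A subset $D$ of $S$ is an IP$^*$ set near $0$ if for every subset $C$ of $S$ which is an IP set near $0$, $C\cap D$ is an IP set near $0$. *)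

From Stdlib Require Import Reals List Lra.
Open Scope R_scope.

Record quat := Quat { qre : R; qi : R; qj : R; qk : R }.

Definition qzero : quat := Quat 0 0 0 0.
Definition qadd (x y : quat) : quat :=
  Quat (qre x + qre y) (qi x + qi y) (qj x + qj y) (qk x + qk y).
Definition qopp (x : quat) : quat := Quat (- qre x) (- qi x) (- qj x) (- qk x).
Definition qsub (x y : quat) : quat := qadd x (qopp y).
Definition qmul (x y : quat) : quat :=
  Quat (qre x * qre y - qi x * qi y - qj x * qj y - qk x * qk y)
       (qre x * qi y + qi x * qre y + qj x * qk y - qk x * qj y)
       (qre x * qj y - qi x * qk y + qj x * qre y + qk x * qi y)
       (qre x * qk y + qi x * qj y - qj x * qi y + qk x * qre y).
Definition qnorm (x : quat) : R :=
  sqrt (qre x ^ 2 + qi x ^ 2 + qj x ^ 2 + qk x ^ 2).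

Definition qset := quat -> Prop.

Definition qsum (x : nat -> quat) (l : list nat) : quat :=
  fold_right (fun n acc => qadd (x n) acc) qzero l.

(** FS(<x_n>): sums over finite nonempty subsets F of N
    (F represented as a nonempty duplicate-free list). *)
Definition FS (x : nat -> quat) : qset :=
  fun y => exists F : list nat, F <> nil /\ NoDup F /\ y = qsum x F.

Definition series_converges (x : nat -> quat) : Prop :=
  exists L : quat, forall eps, 0 < eps ->
    exists N, forall n, (N <= n)%nat -> qnorm (qsub (qsum x (seq 0 n)) L) < eps.

Definition IP_near0 (S A : qset) : Prop :=
  exists x : nat -> quat, (forall n, S (x n)) /\ series_converges x /\
    (forall y, FS x y -> A y).

Definition IPstar_near0 (S D : qset) : Prop :=
  forall C : qset, (forall c, C c -> S c) -> IP_near0 S C ->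
    IP_near0 S (fun y => C y /\ D y).

(* Left and right multiplication by a nonzero s are additive maps of H that are
   bounded (|s a| = |s| |a|), preserve S and have bounded additive left inverses
   (multiplication by s^-1).  Bounded additive maps commute with finite sums and
   preserve convergence of series, so they send IP sets near 0 to IP sets near 0;
   this is (1).  For (2), if C is an IP set near 0 then so is sC, hence so is
   sC ∩ A, and s^-1 (sC ∩ A) is an IP set near 0 contained in C ∩ s^-1 A. *)

From Pilot Require Import Defs.
From Stdlib Require Import Reals Lra Psatz List.
Open Scope R_scope.

Lemma qnorm_ge0 (a : quat) : 0 <= qnorm a.
Proof. unfold qnorm; apply sqrt_pos. Qed.

Lemma qnorm_qmul (a b : quat) : qnorm (qmul a b) = qnorm a * qnorm b.
Proof.
  destruct a as [a1 a2 a3 a4], b as [b1 b2 b3 b4]; unfold qnorm; simpl.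
  rewrite <- sqrt_mult by nra. f_equal. ring.
Qed.

Lemma qadd_qzero_r (a : quat) : qadd a qzero = a.
Proof. destruct a; unfold qadd, qzero; simpl; f_equal; ring. Qed.

Lemma qadd_diag_eq0 (a : quat) : qadd a a = a -> a = qzero.
Proof.
  destruct a; unfold qadd, qzero; simpl; intro E; injection E; intros.
  f_equal; lra.
Qed.

Lemma qadd_eq_qsub (a b c : quat) : qadd a b = c -> a = qsub c b.
Proof.
  intros <-; destruct a, b; unfold qsub, qadd, qopp; simpl; f_equal; ring.
Qed.

Definition qimage (f : quat -> quat) (A : qset) : qset :=
  fun y => exists a, A a /\ y = f a.

Record bounded_additive (f : quat -> quat) : Prop := BoundedAdditive {
  map_qadd : forall a b, f (qadd a b) = qadd (f a) (f b);
  map_bound : exists K, 0 < K /\ forall a, qnorm (f a) <= K * qnorm a }.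

Section BoundedAdditiveMap.

Variable f : quat -> quat.
Hypothesis f_bounded_additive : bounded_additive f.

Lemma map_qzero : f qzero = qzero.
Proof.
  apply qadd_diag_eq0; rewrite <- map_qadd by exact f_bounded_additive.
  now rewrite qadd_qzero_r.
Qed.

Lemma map_qsub (a b : quat) : f (qsub a b) = qsub (f a) (f b).
Proof.
  apply qadd_eq_qsub; rewrite <- map_qadd by exact f_bounded_additive.
  f_equal; destruct a, b; unfold qsub, qadd, qopp; simpl; f_equal; ring.
Qed.

Lemma map_qsum (x : nat -> quat) (l : list nat) :
  qsum (fun n => f (x n)) l = f (qsum x l).
Proof.
  induction l as [|n l IH]; simpl.
  - now rewrite map_qzero.
  - now rewrite IH, map_qadd by exact f_bounded_additive.
Qed.

Lemma map_series_converges (x : nat -> quat) :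
  series_converges x -> series_converges (fun n => f (x n)).
Proof.
  intros [L HL]; destruct (map_bound f f_bounded_additive) as [K [HK Hf]].
  exists (f L); intros eps Heps.
  destruct (HL (eps / K)) as [N HN]; [now apply Rdiv_lt_0_compat|].
  exists N; intros n Hn.
  rewrite map_qsum, <- map_qsub.
  apply Rle_lt_trans with (1 := Hf _).
  specialize (HN n Hn).
  replace eps with (K * (eps / K)) by (field; lra).
  now apply Rmult_lt_compat_l.
Qed.

Lemma FS_map (x : nat -> quat) (y : quat) :
  FS (fun n => f (x n)) y -> qimage f (FS x) y.
Proof.
  intros [F [Fne [Fnodup ->]]]; exists (qsum x F); split.
  - now exists F.
  - apply map_qsum.
Qed.

End BoundedAdditiveMap.

Lemma FS_single (x : nat -> quat) (n : nat) : FS x (x n).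
Proof.
  exists (n :: nil); repeat split.
  - discriminate.
  - constructor; [intros []|constructor].
  - simpl; now rewrite qadd_qzero_r.
Qed.

Lemma IP_near0_mono (S A B : qset) :
  (forall y, A y -> B y) -> IP_near0 S A -> IP_near0 S B.
Proof. intros AB [x [Sx [Hx FSA]]]; exists x; auto. Qed.

(* The terms of the image sequence need only lie in S', which is what lets
   multiplication by s^-1 (which need not preserve S) be used below. *)
Lemma IP_near0_image (S S' A : qset) (g : quat -> quat) :
  bounded_additive g -> (forall a, A a -> S' (g a)) ->
  IP_near0 S A -> IP_near0 S' (qimage g A).
Proof.
  intros Hg gA [x [Sx [Hx FSA]]].
  exists (fun n => g (x n)); repeat split.
  - intro n; apply gA, FSA, FS_single.
  - now apply map_series_converges.
  - intros y Hy; destruct (FS_map g Hg x y Hy) as [z [FSz ->]].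
    exists z; auto.
Qed.

Lemma IPstar_near0_preimage (S A : qset) (f g : quat -> quat) :
  bounded_additive f -> bounded_additive g ->
  (forall a, S a -> S (f a)) -> (forall a, g (f a) = a) ->
  IPstar_near0 S A -> IPstar_near0 S (fun t => S t /\ A (f t)).
Proof.
  intros Hf Hg Sf gK HA C SC IPC.
  assert (IPfC : IP_near0 S (qimage f C)).
  { apply IP_near0_image with (S := S); auto. }
  assert (IPfCA : IP_near0 S (fun y => qimage f C y /\ A y)).
  { apply HA; [intros y [c [Cc ->]]; auto | exact IPfC]. }
  apply IP_near0_mono with (A := qimage g (fun y => qimage f C y /\ A y)).
  - intros y [w [[[c [Cc ->]] Afc] ->]]; rewrite gK; auto.
  - apply IP_near0_image with (S := S); [exact Hg | | exact IPfCA].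
    intros w [[c [Cc ->]] _]; rewrite gK; auto.
Qed.

Lemma bounded_additive_qmull (c : quat) : bounded_additive (qmul c).
Proof.
  split.
  - intros [] []; destruct c; unfold qmul, qadd; simpl; f_equal; ring.
  - exists (qnorm c + 1); split; [pose proof (qnorm_ge0 c); lra|].
    intro a; rewrite qnorm_qmul; pose proof (qnorm_ge0 a); nra.
Qed.

Lemma bounded_additive_qmulr (c : quat) : bounded_additive (fun a => qmul a c).
Proof.
  split.
  - intros [] []; destruct c; unfold qmul, qadd; simpl; f_equal; ring.
  - exists (qnorm c + 1); split; [pose proof (qnorm_ge0 c); lra|].
    intro a; rewrite qnorm_qmul; pose proof (qnorm_ge0 a); nra.
Qed.

Definition qnorm2 (s : quat) : R := qre s ^ 2 + qi s ^ 2 + qj s ^ 2 + qk s ^ 2.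

Definition qinv (s : quat) : quat :=
  Quat (qre s / qnorm2 s) (- qi s / qnorm2 s) (- qj s / qnorm2 s) (- qk s / qnorm2 s).

Lemma qnorm2_neq0 (s : quat) : s <> qzero -> qnorm2 s <> 0.
Proof.
  destruct s as [a b c d]; unfold qnorm2, qzero; simpl; intros Hs H; apply Hs.
  f_equal; nra.
Qed.

Lemma qmulKf (s a : quat) : s <> qzero -> qmul (qinv s) (qmul s a) = a.
Proof.
  intro Hs; pose proof (qnorm2_neq0 s Hs) as Hn.
  destruct s as [s1 s2 s3 s4], a; unfold qinv, qnorm2, qmul in *; cbn [Defs.qre Defs.qi Defs.qj Defs.qk] in *.
  f_equal; field; exact Hn.
Qed.

Lemma qmulfK (s a : quat) : s <> qzero -> qmul (qmul a s) (qinv s) = a.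
Proof.
  intro Hs; pose proof (qnorm2_neq0 s Hs) as Hn.
  destruct s as [s1 s2 s3 s4], a; unfold qinv, qnorm2, qmul in *; cbn [Defs.qre Defs.qi Defs.qj Defs.qk] in *.
  f_equal; field; exact Hn.
Qed.

Theorem lemma2p3 (S : qset)
  (S_add : forall a b, S a -> S b -> S (qadd a b))
  (S_dense : forall (x : quat) (eps : R), 0 < eps ->
     exists s, S s /\ qnorm (qsub s x) < eps)
  (S_nz : forall a, S a -> a <> qzero)
  (S_mul : forall a b, S a -> S b -> S (qmul a b)) :
  (forall A : qset, (forall a, A a -> S a) -> IP_near0 S A ->
     forall s, S s -> qnorm s < 1 -> s <> qzero ->
       IP_near0 S (fun y => exists a, A a /\ y = qmul s a))
  /\
  (forall A : qset, (forall a, A a -> S a) -> IPstar_near0 S A ->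
     forall s, S s -> qnorm s < 1 -> s <> qzero ->
       IPstar_near0 S (fun t => S t /\ A (qmul s t)) /\
       IPstar_near0 S (fun t => S t /\ A (qmul t s))).
Proof.
  split.
  - intros A SA IPA s Ss _ _.
    apply (IP_near0_image S S A (qmul s)); auto using bounded_additive_qmull.
  - intros A _ HA s Ss _ s_neq0; split.
    + apply IPstar_near0_preimage with (g := qmul (qinv s));
        auto using bounded_additive_qmull.
      intro a; now apply qmulKf.
    + apply IPstar_near0_preimage with (g := fun t => qmul t (qinv s));
        auto using bounded_additive_qmulr.
      intro a; now apply qmulfK.
Qed.
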